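(* Let $K$ be a characteristic kernel on $\mathcal S=\{1,\ldots,M\}$ ($M\ge2$), let $\pi_1,\dots,\pi_M\in(0,1)$ with $\sum_i\pi_i=1$, and let $P_1,\ldots,P_M$ be probability measures on a measurable space $\mathcal{Z}$. Then the KMD $\eta=\eta(P_1,\ldots,P_M)$ satisfies: (i) $\eta\in[0,1]$; (ii) $\eta=0$ if and only if $P_1=\cdots=P_M$; (iii) $\eta=1$ if and only if $P_1,\ldots,P_M$ are mutually singular, i.e. there exist pairwise disjoint measurable sets $A_1,\ldots,A_M$ with $P_i(A_i)=1$ for $i=1,\ldots,M$.
   Context: A kernel on $\mathcal S=\{1,\ldots,M\}$ is a symmetric function $K:\mathcal S\times\mathcal S\to\mathbb R$ such that the matrix $[K(i,j)]_{i,j=1}^M$ is positive semidefinite; it is characteristic if $\sum_{i,j=1}^M\alpha_i\alpha_jK(i,j)>0$ for every nonzero $(\alpha_1,\ldots,\alpha_M)\in\mathbb R^M$ with $\sum_i\alpha_i=0$. Given $P_1,\dots,P_M$ and $\pi$, let $(\tilde Z,\tilde\Delta)$ be a random pair with $\mathbb P(\tilde\Delta=i)=\pi_i$ and conditional law of $\tilde Z$ given $\tilde\Delta=i$ equal to $P_i$; let $(\tilde Z_1,\tilde\Delta_1),(\tilde Z_2,\tilde\Delta_2)$ be i.i.d. copies of $(\tilde Z,\tilde\Delta)$; and let $\tilde\Delta'$ be a random variable such that $(\tilde Z,\tilde\Delta')$ has the same law as $(\tilde Z,\tilde\Delta)$ and $\tilde\Delta,\tilde\Delta'$ are conditionally independent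 given $\tilde Z$. The kernel measure of multi-sample dissimilarity (KMD) is $$\eta(P_1,\ldots,P_M)=\frac{\mathbb E[K(\tilde\Delta,\tilde\Delta')]-\mathbb E[K(\tilde\Delta_1,\tilde\Delta_2)]}{\mathbb E[K(\tilde\Delta,\tilde\Delta)]-\mathbb E[K(\tilde\Delta_1,\tilde\Delta_2)]}.$$ *)

From HB Require Import structures.
From mathcomp Require Import all_boot all_order all_algebra.
From mathcomp Require Import all_classical all_reals all_analysis.
Set Implicit Arguments. Unset Strict Implicit. Unset Printing Implicit Defensive.
Import Order.TTheory GRing.Theory Num.Theory.
Local Open Scope ring_scope.
Local Open Scope classical_set_scope.

Definition is_kernel (R : realType) (M : nat) (K : 'I_M -> 'I_M -> R) : Prop :=
  (forall i j, K i j = K j i) /\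
  (forall a : 'I_M -> R, 0 <= \sum_(i < M) \sum_(j < M) a i * a j * K i j).

Definition characteristic_kernel (R : realType) (M : nat)
    (K : 'I_M -> 'I_M -> R) : Prop :=
  is_kernel K /\
  (forall a : 'I_M -> R, (exists i, a i != 0) -> \sum_(i < M) a i = 0 ->
     0 < \sum_(i < M) \sum_(j < M) a i * a j * K i j).

(* p i z is (a version of) the conditional probability P(Delta~ = i | Z~ = z),
   where (Z~, Delta~) has P(Delta~ = i) = pi i and Z~ | Delta~ = i ~ P i.
   Defining property: for every measurable A,
     P(Delta~ = i, Z~ \in A) = E[p i (Z~) ; Z~ \in A],
   where the law of Z~ is the mixture sum_k pi_k P_k. *)
Definition cond_label_prob d (T : measurableType d) (R : realType) (M : nat)
    (pi : 'I_M -> R) (P : 'I_M -> probability T R) (p : 'I_M -> T -> R) : Prop :=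
  (forall i, measurable_fun setT (p i)) /\
  (forall i x, 0 <= p i x <= 1) /\
  (forall i (A : set T), measurable A ->
     ((pi i)%:E * P i A =
      \sum_(k < M) (pi k)%:E * \int[P k]_(x in A) (p i x)%:E)%E).

(* E[K(Delta~, Delta~')] where Delta~, Delta~' are conditionally independent
   given Z~, each with conditional law p . (Z~):
   = E[ sum_{i,j} K(i,j) p_i(Z~) p_j(Z~) ], Z~ ~ sum_k pi_k P_k. *)
Definition EK_cond d (T : measurableType d) (R : realType) (M : nat)
    (K : 'I_M -> 'I_M -> R) (pi : 'I_M -> R) (P : 'I_M -> probability T R)
    (p : 'I_M -> T -> R) : R :=
  \sum_(k < M) pi k *
    fine (\int[P k]_x (\sum_(i < M) \sum_(j < M) K i j * p i x * p j x)%:E)%E.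

Definition EK_diag (R : realType) (M : nat) (K : 'I_M -> 'I_M -> R)
    (pi : 'I_M -> R) : R :=
  \sum_(i < M) pi i * K i i.

Definition EK_indep (R : realType) (M : nat) (K : 'I_M -> 'I_M -> R)
    (pi : 'I_M -> R) : R :=
  \sum_(i < M) \sum_(j < M) pi i * pi j * K i j.

Definition KMD d (T : measurableType d) (R : realType) (M : nat)
    (K : 'I_M -> 'I_M -> R) (pi : 'I_M -> R) (P : 'I_M -> probability T R)
    (p : 'I_M -> T -> R) : R :=
  (EK_cond K pi P p - EK_indep K pi) / (EK_diag K pi - EK_indep K pi).

From HB Require Import structures.
From mathcomp Require Import all_boot all_order all_algebra.
From mathcomp Require Import all_classical all_reals all_analysis.
From mathcomp Require Import measurable_realfun ring.
Import Order.TTheory GRing.Theory Num.Theory.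
Local Open Scope ring_scope.
Local Open Scope classical_set_scope.

(* Let p_i(z) = P(Delta~ = i | Z~ = z), let E be the expectation under the law
   sum_k pi_k P_k of Z~, and write Q(a) = sum_ij a_i a_j K(i,j) and
   d(i,j) = K(i,i) + K(j,j) - 2 K(i,j).  Expanding the kernel gives
     numerator of eta             = E[Q(p(Z~) - pi)],
     2 (denominator - numerator)  = E[sum_ij p_i(Z~) p_j(Z~) d(i,j)],
     2 denominator                = sum_ij pi_i pi_j d(i,j),
   all three nonnegative since K is a kernel, the last one positive since K is
   characteristic (d(i,j) > 0 for i <> j).  Hence 0 <= eta <= 1.  As Q(a) = 0
   forces a = 0 when sum_i a_i = 0, eta = 0 iff p(Z~) = pi almost surely, i.e.
   iff every P_i equals the mixture.  Likewise eta = 1 iff p_i p_j = 0 almost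
   surely for i <> j, i.e. iff p(Z~) is almost surely a vertex e_i of the
   simplex, and then the regions {p = e_i} separate the P_i. *)

Section finite_sums.
Context {R : numDomainType} {I : finType}.

Lemma sumr_delta (F : I -> R) u : \sum_j (j == u)%:R * F j = F u.
Proof.
rewrite (bigD1 u) //= eqxx mul1r big1 ?addr0 // => j /negbTE ->.
by rewrite mul0r.
Qed.

Lemma sumr_delta1 u : \sum_(j : I) (j == u)%:R = 1 :> R.
Proof. by rewrite (bigD1 u) //= eqxx big1 ?addr0 // => j /negbTE ->. Qed.

Lemma psumr2_eq0 {F : I -> I -> R} : (forall i j, 0 <= F i j) ->
  \sum_i \sum_j F i j = 0 -> forall i j, F i j = 0.
Proof.
move=> F_ge0 F0 i j.
have Fi0 : \sum_j F i j = 0.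
  by move/psumr_eq0P: F0; apply=> // k _; apply: sumr_ge0.
by move/psumr_eq0P: Fi0; apply.
Qed.

Lemma orthogonal_sum1_delta {a : I -> R} {i : I} :
  \sum_j a j = 1 -> (forall j k, j != k -> a j * a k = 0) -> a i != 0 ->
  forall j, a j = (j == i)%:R.
Proof.
move=> a_sum1 a_orth ai_neq0 j.
have a_off k : k != i -> a k = 0.
  move=> ki; have := a_orth i k; rewrite eq_sym ki => /(_ isT) /eqP.
  by rewrite mulf_eq0 (negbTE ai_neq0) => /eqP.
have [->|ji] := eqVneq j i; last by rewrite a_off.
by rewrite -a_sum1 (bigD1 i) //= big1 ?addr0.
Qed.

End finite_sums.

Section kernel_form.
Context {R : comPzRingType} {M : nat} (K : 'I_M -> 'I_M -> R).

Definition kernel_form (a : 'I_M -> R) : R := \sum_i \sum_j a i * a j * K i j.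

(* The squared distance between the feature maps K(i, .) and K(j, .). *)
Definition kernel_dist i j : R := K i i + K j j - 2 * K i j.

Lemma kernel_distxx i : kernel_dist i i = 0.
Proof. by rewrite /kernel_dist; ring. Qed.

Lemma sum_kernel_dist (a : 'I_M -> R) :
  \sum_i \sum_j a i * a j * kernel_dist i j =
  2 * ((\sum_i a i) * (\sum_i a i * K i i) - kernel_form a).
Proof.
have expand i j : a i * a j * kernel_dist i j =
    a i * K i i * a j + a i * (a j * K j j) - 2 * (a i * a j * K i j).
  by rewrite /kernel_dist; ring.
transitivity (\sum_i (a i * K i i * \sum_j a j + a i * \sum_j a j * K j j
    - 2 * \sum_j a i * a j * K i j)).
  apply: eq_bigr => i _; under eq_bigr do rewrite expand.
  by rewrite sumrB big_split /= !mulr_sumr.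
rewrite sumrB big_split /= -!mulr_suml -mulr_sumr /kernel_form.
ring.
Qed.

End kernel_form.

Section kernel.
Context {R : realType} {M : nat} {K : 'I_M -> 'I_M -> R}.
Hypothesis K_kernel : is_kernel K.

Lemma kernel_form_ge0 a : 0 <= kernel_form K a.
Proof. exact: K_kernel.2. Qed.

Lemma kernel_form_delta u v :
  kernel_form K (fun i => (i == u)%:R - (i == v)%:R) = kernel_dist K u v.
Proof.
rewrite /kernel_form /kernel_dist.
under eq_bigr do under eq_bigr do rewrite -mulrA.
under eq_bigr do rewrite -mulr_sumr.
under eq_bigr do under eq_bigr do rewrite mulrBl.
under eq_bigr do rewrite sumrB !(sumr_delta (K _)).
under eq_bigr do rewrite mulrBl.
rewrite sumrB !(sumr_delta (fun i => K i u - K i v)) (K_kernel.1 v u).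
ring.
Qed.

Lemma kernel_dist_ge0 u v : 0 <= kernel_dist K u v.
Proof. by rewrite -kernel_form_delta kernel_form_ge0. Qed.

End kernel.

Section characteristic_kernel.
Context {R : realType} {M : nat} {K : 'I_M -> 'I_M -> R}.
Hypothesis K_char : characteristic_kernel K.

Lemma kernel_dist_gt0 {u v} : u != v -> 0 < kernel_dist K u v.
Proof.
move=> uv; rewrite -(kernel_form_delta K_char.1); apply: K_char.2.
  by exists u; rewrite eqxx (negbTE uv) subr0 oner_neq0.
by rewrite sumrB !sumr_delta1 subrr.
Qed.

Lemma kernel_form_eq0P {a : 'I_M -> R} :
  \sum_i a i = 0 -> kernel_form K a = 0 <-> forall i, a i = 0.
Proof.
move=> a_sum0; split=> [a0 i|a0]; last first.
  rewrite /kernel_form big1 // => i _.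
  by rewrite big1 // => j _; rewrite a0 !mul0r.
apply/eqP/negPn/negP => ai_neq0.
have := K_char.2 a (ex_intro _ i ai_neq0) a_sum0.
by rewrite -/(kernel_form K a) a0 ltxx.
Qed.

Lemma sum_kernel_dist_eq0P {a : 'I_M -> R} : (forall i, 0 <= a i) ->
  \sum_i \sum_j a i * a j * kernel_dist K i j = 0 <->
  forall i j, i != j -> a i * a j = 0.
Proof.
move=> a_ge0; split=> [a0 i j ij|a_orth].
  have terms_ge0 k l : 0 <= a k * a l * kernel_dist K k l.
    by rewrite !mulr_ge0 // (kernel_dist_ge0 K_char.1).
  have /eqP := psumr2_eq0 terms_ge0 a0 i j.
  by rewrite mulf_eq0 (gt_eqF (kernel_dist_gt0 ij)) orbF => /eqP.
rewrite big1 // => i _; rewrite big1 // => j _.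
by have [->|ij] := eqVneq i j; rewrite ?kernel_distxx ?mulr0 // a_orth ?mul0r.
Qed.

End characteristic_kernel.

Section bounded_measurable.
Context {d : measure_display} {T : measurableType d} {R : realType}.

Definition bounded_measurable (f : T -> R) : Prop :=
  measurable_fun setT f /\ exists c : R, forall x, `|f x| <= c.

Lemma bounded_measurable_cst c : bounded_measurable (fun=> c).
Proof. by split; [exact: measurable_cst | exists `|c|]. Qed.

Lemma bounded_measurable_indic (A : set T) :
  measurable A -> bounded_measurable (fun x => \1_A x : R).
Proof.
move=> mA; split; first exact: measurable_indic.
by exists 1 => x; rewrite indicE; case: (x \in A); rewrite ?normr1 ?normr0.
Qed.

Lemma bounded_measurableN f :
  bounded_measurable f -> bounded_measurable (fun x => - f x).
Proof.
move=> [mf [c fc]]; split; first exact: measurableT_comp.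
by exists c => x; rewrite normrN.
Qed.

Lemma bounded_measurableD f g : bounded_measurable f -> bounded_measurable g ->
  bounded_measurable (fun x => f x + g x).
Proof.
move=> [mf [a fa]] [mg [b gb]]; split; first exact: measurable_funD.
by exists (a + b) => x; rewrite (le_trans (ler_normD _ _)) ?lerD.
Qed.

Lemma bounded_measurableM f g : bounded_measurable f -> bounded_measurable g ->
  bounded_measurable (fun x => f x * g x).
Proof.
move=> [mf [a fa]] [mg [b gb]]; split; first exact: measurable_funM.
by exists (a * b) => x; rewrite normrM ler_pM.
Qed.

Lemma bounded_measurable_sum (I : Type) (s : seq I) (Q : pred I)
    (F : I -> T -> R) : (forall i, Q i -> bounded_measurable (F i)) ->
  bounded_measurable (fun x => \sum_(i <- s | Q i) F i x).
Proof.
move=> bF; elim: s => [|i s IHs].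
  under [X in bounded_measurable X]funext do rewrite big_nil.
  exact: bounded_measurable_cst.
under [X in bounded_measurable X]funext do rewrite big_cons.
have [Qi|_] := boolP (Q i); last exact: IHs.
exact: bounded_measurableD (bF i Qi) IHs.
Qed.

Lemma bounded_measurable_integrable (mu : {finite_measure set T -> \bar R}) f :
  bounded_measurable f -> mu.-integrable setT (EFin \o f).
Proof.
move=> [mf [c fc]]; apply: measurable_bounded_integrable => //.
  exact: fin_num_fun_lty.
exists c; split=> [|e ce x _]; first exact: num_real.
exact: le_trans (fc x) (ltW ce).
Qed.

End bounded_measurable.

Create HintDb bounded_measurable.
#[global] Hint Resolve bounded_measurable_cst : bounded_measurable.

Ltac bounded_measurable := solve [repeat first
  [ assumption | solve [eauto with bounded_measurable]
  | (apply: bounded_measurable_indic; assumption)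
  | apply: bounded_measurableN | apply: bounded_measurableD
  | apply: bounded_measurableM | apply: bounded_measurable_sum
  | progress intros ]].

Section Rintegral_ae.
Context {d : measure_display} {T : measurableType d} {R : realType}.
Variable mu : {measure set T -> \bar R}.

Lemma ae_eq_Rintegral {f g : T -> R} :
  measurable_fun setT f -> measurable_fun setT g ->
  {ae mu, forall x, f x = g x} -> \int[mu]_x f x = \int[mu]_x g x.
Proof.
move=> mf mg fg; congr fine; apply: ae_eq_integral => //.
- exact/measurable_EFinP.
- exact/measurable_EFinP.
- by apply: filterS fg => x ->.
Qed.

Lemma Rintegral_eq0_ae (f : T -> R) : mu.-integrable setT (EFin \o f) ->
  (forall x, 0 <= f x) -> \int[mu]_x f x = 0 -> {ae mu, forall x, f x = 0}.
Proof.
move=> f_int f_ge0 f0.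
have mf : measurable_fun setT (EFin \o f) := measurable_int _ f_int.
have : (\int[mu]_x `|(EFin \o f) x| = 0)%E.
  rewrite -[RHS]/(0%:E) -f0 fineK ?(integrable_fin_num _ f_int) //.
  by apply: eq_integral => x _ /=; rewrite ger0_norm.
move/(ae_eq_integral_abs _ measurableT mf).
by apply: filterS => x /(_ I) [].
Qed.

End Rintegral_ae.

Definition mutually_singular {d : measure_display} {T : measurableType d}
    {R : realType} {M : nat} (P : 'I_M -> probability T R) : Prop :=
  exists A : 'I_M -> set T,
    [/\ forall i, measurable (A i),
        forall i j, i != j -> A i `&` A j = set0 &
        forall i, P i (A i) = 1%E].

Section mixture.
Context {d : measure_display} {T : measurableType d} {R : realType} {M : nat}.
Context { pi : 'I_M -> R } {P : 'I_M -> probability T R}.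
Hypotheses (pi_gt0 : forall k, 0 < pi k) (pi_sum1 : \sum_k pi k = 1).

Definition Emix (f : T -> R) : R := \sum_(k < M) pi k * \int[P k]_x f x.

Lemma EmixD f g : bounded_measurable f -> bounded_measurable g ->
  Emix (fun x => f x + g x) = Emix f + Emix g.
Proof.
move=> bf bg; rewrite /Emix -big_split; apply: eq_bigr => k _.
by rewrite RintegralD ?mulrDr //; exact: bounded_measurable_integrable.
Qed.

Lemma EmixZ c f : bounded_measurable f -> Emix (fun x => c * f x) = c * Emix f.
Proof.
move=> bf; rewrite /Emix mulr_sumr; apply: eq_bigr => k _.
by rewrite RintegralZl 1?mulrCA //; exact: bounded_measurable_integrable.
Qed.

Let measure_setT k : (P k : {measure set T -> \bar R}) setT = 1%E.
Proof. exact: probability_setT. Qed.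

Lemma Emix_cst c : Emix (fun=> c) = c.
Proof.
rewrite /Emix; under eq_bigr do rewrite Rintegral_cst // measure_setT mulr1.
by rewrite -mulr_suml pi_sum1 mul1r.
Qed.

Lemma Emix_sum (I : Type) (s : seq I) (Q : pred I) (F : I -> T -> R) :
  (forall i, Q i -> bounded_measurable (F i)) ->
  Emix (fun x => \sum_(i <- s | Q i) F i x) = \sum_(i <- s | Q i) Emix (F i).
Proof.
move=> bF; elim: s => [|i s IHs].
  by under [X in Emix X]funext do rewrite big_nil; rewrite Emix_cst big_nil.
under [X in Emix X]funext do rewrite big_cons.
rewrite big_cons; have [Qi|_] := boolP (Q i); last exact: IHs.
by rewrite EmixD ?IHs //; bounded_measurable.
Qed.

Lemma Emix_ge0 f : (forall x, 0 <= f x) -> 0 <= Emix f.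
Proof.
move=> f_ge0; apply: sumr_ge0 => k _.
by rewrite mulr_ge0 ?(ltW (pi_gt0 k)) ?Rintegral_ge0.
Qed.

Lemma eq_Emix_ae {f g : T -> R} :
  measurable_fun setT f -> measurable_fun setT g ->
  (forall k, {ae P k, forall x, f x = g x}) -> Emix f = Emix g.
Proof.
move=> mf mg fg; apply: eq_bigr => k _.
by rewrite (ae_eq_Rintegral _ mf mg (fg k)).
Qed.

Lemma Emix_eq0P {f : T -> R} : bounded_measurable f -> (forall x, 0 <= f x) ->
  Emix f = 0 <-> forall k, {ae P k, forall x, f x = 0}.
Proof.
move=> bf f_ge0; split=> [Ef0 k|f0].
  apply: Rintegral_eq0_ae => //; first exact: bounded_measurable_integrable.
  have terms_ge0 j : true -> 0 <= pi j * \int[P j]_x f x.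
    by rewrite mulr_ge0 ?(ltW (pi_gt0 j)) ?Rintegral_ge0.
  have /(_ k isT)/eqP := psumr_eq0P terms_ge0 Ef0.
  by rewrite mulf_eq0 (gt_eqF (pi_gt0 k)) => /eqP.
by rewrite (@eq_Emix_ae _ (fun=> 0)) ?Emix_cst //; case: bf.
Qed.

Lemma Emix_indic A : measurable A ->
  Emix (fun x => \1_A x) = \sum_k pi k * fine (P k A).
Proof.
by move=> mA; apply: eq_bigr => k _; rewrite /Rintegral integral_indic ?setIT.
Qed.

Lemma ae_eq0_Emix_indicM h : bounded_measurable h ->
  (forall A, measurable A -> Emix (fun x => h x * \1_A x) = 0) ->
  forall k, {ae P k, forall x, h x = 0}.
Proof.
move=> bh h0.
have measurable_gt0 (g : T -> R) :
    measurable_fun setT g -> measurable [set x | 0 < g x].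
  move=> mg; have -> : [set x | 0 < g x] = g @^-1` `]0, +oo[.
    by apply/seteqP; split=> x /=; rewrite in_itv /= andbT.
  by rewrite -[X in measurable X]setTI; apply: mg => //; exact: measurable_itv.
pose pos := [set x | 0 < h x]; pose neg := [set x | 0 < - h x].
have [mh _] := bh.
have mpos : measurable pos by exact: measurable_gt0.
have mneg : measurable neg by apply: measurable_gt0; exact: measurableT_comp.
have normh : (fun x => `|h x|) =
    (fun x => h x * \1_pos x + (-1) * (h x * \1_neg x)).
  apply/funext => x; rewrite !indicE.
  have [hx|hx|<-] := ltrgtP 0 (h x);
    last by rewrite normr0 !(mul0r, mulr0) addr0.
  - rewrite (mem_set (hx : pos x)) memNset /neg /= ?oppr_gt0 ?ltNge ?ltW //.
    by rewrite mulr1 !mulr0 addr0 gtr0_norm.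
  - rewrite memNset /pos /= ?ltNge ?(ltW hx) //.
    rewrite (mem_set (_ : neg x)) /neg /= ?oppr_gt0 //.
    by rewrite mulr1 mulr0 add0r mulN1r ltr0_norm.
have babs : bounded_measurable (fun x => `|h x|).
  by rewrite normh; bounded_measurable.
have : Emix (fun x => `|h x|) = 0.
  rewrite normh EmixD; try bounded_measurable.
  rewrite EmixZ; try bounded_measurable.
  by rewrite !h0 // mulr0 addr0.
move/(Emix_eq0P babs (fun x => normr_ge0 (h x))) => habs k.
by apply: filterS (habs k) => x /normr0_eq0.
Qed.

Section labels.
Context {p : 'I_M -> T -> R}.
Hypothesis p_cond : cond_label_prob pi P p.

Lemma label_ge0 i x : 0 <= p i x.
Proof. by case/andP: (p_cond.2.1 i x). Qed.

Lemma bounded_measurable_label i : bounded_measurable (p i).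
Proof.
split; first exact: p_cond.1.
by exists 1 => x; case/andP: (p_cond.2.1 i x) => p_ge0 p_le1; rewrite ger0_norm.
Qed.
#[local] Hint Resolve bounded_measurable_label : bounded_measurable.

Lemma Emix_labelM_indic i A : measurable A ->
  Emix (fun x => p i x * \1_A x) = pi i * fine (P i A).
Proof.
move=> mA; have summand k : ((pi k)%:E * \int[P k]_(x in A) (p i x)%:E)%E =
    (pi k * \int[P k]_x (p i x * \1_A x))%:E.
  have bpA : bounded_measurable (fun x => p i x * \1_A x) by bounded_measurable.
  rewrite EFinM /Rintegral fineK; last first.
    by apply: integrable_fin_num => //; exact: bounded_measurable_integrable.
  congr (_ * _)%E; rewrite [LHS]integral_mkcond; apply: eq_integral => x _.
  by rewrite patchE indicE; case: (x \in A); rewrite /= ?mulr1 ?mulr0.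
apply/EFin_inj; rewrite EFinM fineK ?fin_num_measure // p_cond.2.2 //.
by rewrite (eq_bigr _ (fun k _ => summand k)) sumEFin.
Qed.

Lemma Emix_label i : Emix (p i) = pi i.
Proof.
rewrite -[RHS]mulr1 -[1 in RHS]/(fine 1%E) -(measure_setT i).
rewrite -Emix_labelM_indic //.
by congr Emix; apply/funext => x; rewrite indicE in_setT mulr1.
Qed.

Lemma labels_sum1_ae k : {ae P k, forall x, \sum_i p i x = 1}.
Proof.
have b1 : bounded_measurable (fun x => 1 - \sum_i p i x) by bounded_measurable.
suff /(_ k) : forall k, {ae P k, forall x, 1 - \sum_i p i x = 0}.
  by apply: filterS => x /eqP; rewrite subr_eq0 => /eqP <-.
apply: ae_eq0_Emix_indicM => // A mA.
rewrite (_ : (fun x => _) =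
    fun x => \1_A x + (-1) * \sum_i p i x * \1_A x); last first.
  by apply/funext => x; rewrite -mulr_suml; ring.
rewrite EmixD; try bounded_measurable.
rewrite EmixZ; try bounded_measurable.
rewrite Emix_sum; try bounded_measurable.
rewrite Emix_indic //.
under [X in _ + _ * X]eq_bigr do rewrite Emix_labelM_indic //.
by rewrite mulN1r subrr.
Qed.

Lemma labels_eq_pi_ae_iff :
  (forall k, {ae P k, forall x i, p i x = pi i}) <->
  (forall i j A, measurable A -> P i A = P j A).
Proof.
split=> [p_pi|P_eq].
  have P_Emix i A : measurable A -> fine (P i A) = Emix (fun x => \1_A x).
    move=> mA; apply: (mulfI (lt0r_neq0 (pi_gt0 i))).
    rewrite -Emix_labelM_indic // -EmixZ; try bounded_measurable.
    have bpA : bounded_measurable (fun x => p i x * \1_A x).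
      by bounded_measurable.
    have bpiA : bounded_measurable (fun x => pi i * \1_A x).
      by bounded_measurable.
    by apply: (eq_Emix_ae bpA.1 bpiA.1) => k; apply: filterS (p_pi k) => x ->.
  move=> i j A mA.
  rewrite -(fineK (fin_num_measure (P i) _ mA)).
  by rewrite -(fineK (fin_num_measure (P j) _ mA)) !P_Emix.
suff p_pi i k : {ae P k, forall x, p i x - pi i = 0}.
  move=> k; apply: filter_forall => i; apply: filterS (p_pi i k) => x /eqP.
  by rewrite subr_eq0 => /eqP.
move: k; apply: ae_eq0_Emix_indicM; try bounded_measurable.
move=> A mA.
rewrite (_ : (fun x => _) =
    fun x => p i x * \1_A x + (- pi i) * \1_A x); last first.
  by apply/funext => x; ring.
rewrite EmixD; try bounded_measurable.
rewrite EmixZ ?Emix_labelM_indic ?Emix_indic //; try bounded_measurable.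
under eq_bigr do rewrite (P_eq _ i A mA).
by rewrite -mulr_suml pi_sum1 mul1r mulNr subrr.
Qed.

Definition label_region i : set T := [set x | forall j, p j x = (j == i)%:R].

Lemma measurable_label_region i : measurable (label_region i).
Proof.
have -> : label_region i =
    (fun x => \sum_j `|p j x - (j == i)%:R|) @^-1` [set 0].
  apply/seteqP; split=> x /=.
    by move=> px; rewrite big1 // => j _; rewrite px subrr normr0.
  move=> /(psumr_eq0P (fun j _ => normr_ge0 _)) px j.
  by apply/eqP; rewrite -subr_eq0 -normr_eq0; apply/eqP/px.
rewrite -[X in measurable X]setTI; apply: measurable_sum => // j.
by apply: measurableT_comp => //; apply: measurable_funB => //; exact: p_cond.1.
Qed.

Lemma label_region_disjoint i j :
  i != j -> label_region i `&` label_region j = set0.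
Proof.
move=> ij; apply/seteqP; split=> // x [/(_ i) + /(_ i)].
by rewrite eqxx (negbTE ij) => -> /eqP; rewrite oner_eq0.
Qed.

Lemma mutually_singular_orthogonal_labels :
  (forall k, {ae P k, forall x i j, i != j -> p i x * p j x = 0}) ->
  mutually_singular P.
Proof.
move=> p_orth; exists label_region; split.
- exact: measurable_label_region.
- exact: label_region_disjoint.
move=> i; have mAi := measurable_label_region i; have mAiC := measurableC mAi.
have : pi i * fine (P i (~` label_region i)) = 0.
  have bpA : bounded_measurable (fun x => p i x * \1_(~` label_region i) x).
    by bounded_measurable.
  rewrite -Emix_labelM_indic // (@eq_Emix_ae _ (fun=> 0)) ?Emix_cst //.
    exact: bpA.1.
  move=> k; apply: filterS2 (p_orth k) (labels_sum1_ae k) => x x_orth x_sum1.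
  have [->|pi_neq0] := eqVneq (p i x) 0; first by rewrite mul0r.
  have x_in : label_region i x := orthogonal_sum1_delta x_sum1 x_orth pi_neq0.
  by rewrite indicE memNset ?mulr0.
move/eqP; rewrite mulf_eq0 (gt_eqF (pi_gt0 i)) /= => /eqP.
rewrite probability_setC // -(fineK (fin_num_measure _ _ mAi)) -EFinB /=.
by move/eqP; rewrite subr_eq0 => /eqP <-.
Qed.

Lemma orthogonal_labels_mutually_singular : mutually_singular P ->
  forall k, {ae P k, forall x i j, i != j -> p i x * p j x = 0}.
Proof.
move=> [A [mA A_disj PA1]] k.
have PAC0 i : P i (~` A i) = 0%E by rewrite probability_setC // PA1 subee.
have A_ae : {ae P k, forall x, A k x}.
  by exists (~` A k); split=> //; exact: measurableC.
have off_k i : {ae P k, forall x, i != k -> p i x * \1_(A k) x = 0}.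
  have [->|ik] := eqVneq i k; first exact: aeW.
  have PiAk : P i (A k) = 0%E.
    apply: subset_measure0 (mA k) (measurableC (mA i)) _ (PAC0 i) => x Akx Aix.
    by have /seteqP[/(_ x (conj Aix Akx))] := A_disj i k ik.
  have bpA : bounded_measurable (fun x => p i x * \1_(A k) x).
    by have := mA k; bounded_measurable.
  have pA_ge0 x : 0 <= p i x * \1_(A k) x.
    by rewrite mulr_ge0 ?label_ge0 ?indic_ge0.
  have /(Emix_eq0P bpA pA_ge0)/(_ k) : Emix (fun x => p i x * \1_(A k) x) = 0.
    by rewrite Emix_labelM_indic // PiAk mulr0.
  by apply: filterS => x ->.
apply: filterS2 A_ae (filter_forall _ off_k) => x Akx x_off.
have p_off i : i != k -> p i x = 0.
  by move=> ik; have := x_off i ik; rewrite indicE mem_set // mulr1.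
move=> i j ij; have [ik|/p_off ->] := eqVneq i k; last by rewrite mul0r.
by rewrite (p_off j) ?mulr0 // -ik eq_sym.
Qed.

End labels.

End mixture.

Arguments Emix {d T R M} pi P f.

Section kernel_measure_of_dissimilarity.
Context {d : measure_display} {T : measurableType d} {R : realType} {M : nat}.
Context {K : 'I_M -> 'I_M -> R} { pi : 'I_M -> R }.
Context {P : 'I_M -> probability T R} {p : 'I_M -> T -> R}.
Hypotheses (M_ge2 : (2 <= M)%N) (K_char : characteristic_kernel K).
Hypotheses (pi_gt0 : forall i, 0 < pi i) (pi_sum1 : \sum_i pi i = 1).
Hypothesis p_cond : cond_label_prob pi P p.
#[local] Hint Resolve bounded_measurable_label : bounded_measurable.

Lemma EK_cond_Emix :
  EK_cond K pi P p = Emix pi P (fun x => kernel_form K (fun i => p i x)).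
Proof.
apply: eq_bigr => k _; congr (_ * fine _); apply: eq_integral => x _.
by congr EFin; apply: eq_bigr => i _; apply: eq_bigr => j _; ring.
Qed.

Lemma EK_condBindepE : EK_cond K pi P p - EK_indep K pi =
  Emix pi P (fun x => kernel_form K (fun i => p i x - pi i)).
Proof.
have centered i j :
    Emix pi P (fun x => (p i x - pi i) * (p j x - pi j) * K i j) =
    Emix pi P (fun x => p i x * p j x * K i j) - pi i * pi j * K i j.
  rewrite (_ : (fun x => _) = fun x => p i x * p j x * K i j +
      ((- (pi j * K i j)) * p i x +
       ((- (pi i * K i j)) * p j x + pi i * pi j * K i j))).
    rewrite !EmixD; try bounded_measurable.
    rewrite !EmixZ ?Emix_label ?Emix_cst //; try bounded_measurable.
    ring.
  by apply/funext => x; ring.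
rewrite EK_cond_Emix /EK_indep /kernel_form !Emix_sum; try bounded_measurable.
rewrite -sumrB; apply: eq_bigr => i _.
rewrite !Emix_sum; try bounded_measurable.
by rewrite -sumrB; apply: eq_bigr => j _; rewrite centered.
Qed.

Lemma EK_diagBcondE : 2 * (EK_diag K pi - EK_cond K pi P p) =
  Emix pi P (fun x => \sum_i \sum_j p i x * p j x * kernel_dist K i j).
Proof.
pose r x := \sum_i \sum_j p i x * p j x * kernel_dist K i j.
pose s x := 2 * (\sum_i K i i * p i x + (-1) * kernel_form K (fun i => p i x)).
have br : bounded_measurable r by rewrite /r; bounded_measurable.
have bs : bounded_measurable s by rewrite /s; bounded_measurable.
have r_s : forall k, {ae P k, forall x, r x = s x}.
  move=> k; apply: filterS (labels_sum1_ae pi_gt0 pi_sum1 p_cond k) => x sum1.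
  rewrite /r /s sum_kernel_dist sum1 mul1r mulN1r.
  by under eq_bigr do rewrite mulrC.
rewrite -/(Emix pi P r) (eq_Emix_ae br.1 bs.1 r_s) /s.
rewrite EmixZ; try bounded_measurable.
rewrite EmixD; try bounded_measurable.
rewrite EmixZ -?EK_cond_Emix ?Emix_sum; try bounded_measurable.
have diag i : Emix pi P (fun x => K i i * p i x) = pi i * K i i.
  by rewrite EmixZ ?Emix_label 1?mulrC //; bounded_measurable.
by under eq_bigr do rewrite diag; rewrite mulN1r.
Qed.

Lemma EK_diagBindepE : 2 * (EK_diag K pi - EK_indep K pi) =
  \sum_i \sum_j pi i * pi j * kernel_dist K i j.
Proof. by rewrite sum_kernel_dist pi_sum1 mul1r. Qed.

Lemma EK_diagBindep_gt0 : 0 < EK_diag K pi - EK_indep K pi.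
Proof.
rewrite -(pmulr_rgt0 _ (ltr0n _ 2)) EK_diagBindepE.
have terms_ge0 i j : 0 <= pi i * pi j * kernel_dist K i j.
  by rewrite mulr_ge0 ?(kernel_dist_ge0 K_char.1) // mulr_ge0 // ltW.
rewrite lt_neqAle sumr_ge0 => [|i _]; last exact: sumr_ge0.
rewrite andbT eq_sym; apply/eqP.
move=> /(psumr2_eq0 terms_ge0)/(_ (Ordinal (ltnW M_ge2)) (Ordinal M_ge2))/eqP.
by rewrite !mulf_eq0 !gt_eqF ?pi_gt0 ?(kernel_dist_gt0 K_char).
Qed.

Let denominator_neq0 := lt0r_neq0 EK_diagBindep_gt0.

Lemma KMD_ge0_le1 : 0 <= KMD K pi P p <= 1.
Proof.
have numerator_ge0 : 0 <= EK_cond K pi P p - EK_indep K pi.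
  by rewrite EK_condBindepE Emix_ge0 // => x; exact: (kernel_form_ge0 K_char.1).
have gap_ge0 : 0 <= EK_diag K pi - EK_cond K pi P p.
  rewrite -(pmulr_rge0 _ (ltr0n _ 2)) EK_diagBcondE Emix_ge0 // => x.
  by apply: sumr_ge0 => i _; apply: sumr_ge0 => j _;
    rewrite !mulr_ge0 ?(label_ge0 p_cond) ?(kernel_dist_ge0 K_char.1).
rewrite divr_ge0 ?(ltW EK_diagBindep_gt0) //= ler_pdivrMr ?EK_diagBindep_gt0 //.
by rewrite mul1r lerD2r -subr_ge0.
Qed.

Lemma KMD_eq0_iff :
  KMD K pi P p = 0 <-> forall k, {ae P k, forall x i, p i x = pi i}.
Proof.
have bq : bounded_measurable (fun x => kernel_form K (fun i => p i x - pi i)).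
  by rewrite /kernel_form; bounded_measurable.
have -> : KMD K pi P p = 0 <-> EK_cond K pi P p - EK_indep K pi = 0.
  rewrite /KMD; split=> [/eqP|->]; last by rewrite mul0r.
  by rewrite mulf_eq0 invr_eq0 (negbTE denominator_neq0) orbF => /eqP.
have q_ge0 x := kernel_form_ge0 K_char.1 (fun i => p i x - pi i).
rewrite EK_condBindepE (Emix_eq0P pi_gt0 pi_sum1 bq q_ge0) /=.
split=> [q0 k|p_pi k].
  apply: filterS2 (q0 k) (labels_sum1_ae pi_gt0 pi_sum1 p_cond k) => x qx sum1.
  have centered : \sum_i (p i x - pi i) = 0 by rewrite sumrB sum1 pi_sum1 subrr.
  move=> i; have /eqP := proj1 (kernel_form_eq0P K_char centered) qx i.
  by rewrite subr_eq0 => /eqP.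
apply: filterS (p_pi k) => x px; rewrite /kernel_form big1 // => i _.
by rewrite big1 // => j _; rewrite !px !subrr !mul0r.
Qed.

Lemma KMD_eq1_iff : KMD K pi P p = 1 <->
  forall k, {ae P k, forall x i j, i != j -> p i x * p j x = 0}.
Proof.
pose r x := \sum_i \sum_j p i x * p j x * kernel_dist K i j.
have br : bounded_measurable r by rewrite /r; bounded_measurable.
have r_ge0 x : 0 <= r x.
  by apply: sumr_ge0 => i _; apply: sumr_ge0 => j _;
    rewrite !mulr_ge0 ?(label_ge0 p_cond) ?(kernel_dist_ge0 K_char.1).
have -> : KMD K pi P p = 1 <-> Emix pi P r = 0.
  rewrite /r -EK_diagBcondE /KMD.
  split=> [/divr1_eq/subIr ->|]; first by rewrite subrr mulr0.
  move/eqP; rewrite mulf_eq0 pnatr_eq0 /= subr_eq0 => /eqP <-.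
  exact: divff.
have r0P x := sum_kernel_dist_eq0P K_char (label_ge0 p_cond ^~ x).
rewrite (Emix_eq0P pi_gt0 pi_sum1 br r_ge0); split=> [r0 k|p_orth k].
  by apply: filterS (r0 k) => x /r0P.
by apply: filterS (p_orth k) => x /r0P.
Qed.

End kernel_measure_of_dissimilarity.

Theorem theorem1 (R : realType) (d : measure_display) (T : measurableType d)
    (M : nat) (K : 'I_M -> 'I_M -> R) (pi : 'I_M -> R)
    (P : 'I_M -> probability T R) (p : 'I_M -> T -> R) :
  (2 <= M)%N ->
  characteristic_kernel K ->
  (forall i, 0 < pi i < 1) ->
  \sum_(i < M) pi i = 1 ->
  cond_label_prob pi P p ->
  [/\ 0 <= KMD K pi P p <= 1,
      KMD K pi P p = 0 <->
        (forall i j (A : set T), measurable A -> P i A = P j A) &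
      KMD K pi P p = 1 <->
        exists A : 'I_M -> set T,
          [/\ forall i, measurable (A i),
              forall i j, i != j -> A i `&` A j = set0 &
              forall i, P i (A i) = 1%E]].
Proof.
move=> M_ge2 K_char pi_bounds pi_sum1 p_cond.
have pi_gt0 i : 0 < pi i by case/andP: (pi_bounds i).
split; first exact: KMD_ge0_le1.
  apply: iff_trans (KMD_eq0_iff M_ge2 K_char pi_gt0 pi_sum1 p_cond) _.
  exact: labels_eq_pi_ae_iff.
apply: iff_trans (KMD_eq1_iff M_ge2 K_char pi_gt0 pi_sum1 p_cond) _.
split; first exact: mutually_singular_orthogonal_labels.
exact: orthogonal_labels_mutually_singular.
Qed.
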